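(* Let $\mathbf P=UV^\top$ be the transition matrix of a Markov chain on $\{1,\dots,p\}$ with stationary distribution $\pi$ having all entries positive, where $U,V\in\mathbb R^{p\times r}$ are entrywise nonnegative with $U\mathbf 1_r=\mathbf 1_p$, $V^\top\mathbf 1_p=\mathbf 1_r$, each meta-state has an anchor state, and $\mathrm{rank}(U)=r$. Let $\mathbf H=[\mathbf h_1,\dots,\mathbf h_r]$ contain the right singular vectors of $\mathbf Q=\mathrm{diag}(\pi)\mathbf P[\mathrm{diag}(\pi)]^{-1/2}$ associated with its nonzero singular values, assume $\mathbf h_1$ has all coordinates positive, let $\mathbf D=[\mathrm{diag}(\mathbf h_1)]^{-1}[\mathbf h_2,\dots,\mathbf h_r]$ with rows $\mathbf d_1^\top,\dots,\mathbf d_p^\top$, let $\mathbf L\in\mathbb R^{r\times r}$ be the invertible matrix with $\mathbf H=[\mathrm{diag}(\pi)]^{-1/2}V\mathbf L$, with columns $\mathbf l_1,\dots,\mathbf l_r$, and let $\mathbf b_1^\top,\dots,\mathbf b_r^\top$ be the rows of $[\mathrm{diag}(\mathbf l_1)]^{-1}[\mathbf l_2,\dots,\mathbf l_r]$ (the vertices of the simplex $\mathcal S_0^*$ containing all $\mathbf d_j$). Then each row of $\mathbf D$ is a convex combination of $\mathbf b_1,\dots,\mathbf b_r$: for each $j$ there is a unique $\mathbf w_j$ in the standard simplex of $\mathbb R^r$ with $\mathbf d_j=\sum_{k=1}^r\mathbf w_j(k)\mathbf b_k$. Furthermore, the matrix $W\in\mathbb R^{p\times r}$ whose $j$-th row is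 $\mathbf w_j^\top$ satisfies $$[\mathrm{diag}(\mathbf h_1)][\mathrm{diag}(\pi)]^{1/2}W=V[\mathrm{diag}(\mathbf l_1)].$$
   Context: A state $j$ is an anchor state of meta-state $k$ if $V_{jk}>0$ and $V_{js}=0$ for all $s\neq k$. The standard simplex of $\mathbb R^r$ is $\{\mathbf w\in\mathbb R^r:\mathbf w\ge0,\ \sum_k\mathbf w(k)=1\}$. *)

From HB Require Import structures.
From mathcomp Require Import all_boot all_order all_algebra.
Set Implicit Arguments. Unset Strict Implicit. Unset Printing Implicit Defensive.
Import Order.TTheory GRing.Theory Num.Theory.
Local Open Scope ring_scope.

Section Defs.
Variable R : rcfType.

Definition nonneg_mx (m n : nat) (A : 'M[R]_(m, n)) : Prop :=
  forall i j, 0 <= A i j.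

Definition transition_mx (p : nat) (P : 'M[R]_p) : Prop :=
  nonneg_mx P /\ forall i, \sum_(j < p) P i j = 1.

Definition stationary_distr (p : nat) (P : 'M[R]_p) (pi : 'rV[R]_p) : Prop :=
  (forall i, 0 <= pi 0 i) /\ \sum_(i < p) pi 0 i = 1 /\ pi *m P = pi.

Definition anchor_state (p r : nat) (V : 'M[R]_(p, r)) (j : 'I_p) (k : 'I_r) : Prop :=
  0 < V j k /\ forall s, s != k -> V j s = 0.

Definition std_simplex (r : nat) (w : 'rV[R]_r) : Prop :=
  (forall k, 0 <= w 0 k) /\ \sum_(k < r) w 0 k = 1.

Definition diag_sqrt (p : nat) (pi : 'rV[R]_p) : 'M[R]_p :=
  diag_mx (map_mx (fun x => Num.sqrt x) pi).
Definition diag_isqrt (p : nat) (pi : 'rV[R]_p) : 'M[R]_p :=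
  diag_mx (map_mx (fun x => (Num.sqrt x)^-1) pi).

(* The columns of H (p x r) are right singular vectors of Q associated with
   (all) its nonzero singular values: compact SVD Q = G Sigma H^T with
   G, H having orthonormal columns and Sigma diagonal with positive entries. *)
Definition right_sing_vectors_nonzero (p r : nat) (Q : 'M[R]_p) (H : 'M[R]_(p, r)) : Prop :=
  exists (G : 'M[R]_(p, r)) (s : 'rV[R]_r),
    G^T *m G = 1%:M /\ H^T *m H = 1%:M /\ (forall k, 0 < s 0 k) /\
    Q = G *m diag_mx s *m H^T.

Definition Dmat (p r' : nat) (H : 'M[R]_(p, r'.+1)) : 'M[R]_(p, r') :=
  \matrix_(i < p, j < r') (H i (lift ord0 j) / H i ord0).

Definition bvec (r' : nat) (L : 'M[R]_(r'.+1)) (k : 'I_r'.+1) : 'rV[R]_r' :=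
  \row_(j < r') (L k (lift ord0 j) / L k ord0).

End Defs.

(** Write [A := V L], so that [H = diag(pi)^(-1/2) A] and the rows of [D] and
    the vertices [b_k] are the rows of [A] and [L] with their first coordinate
    normalised to [1] and then dropped.  Since [row j A = sum_k V_jk row k L],
    normalising gives [d_j = sum_k (V_jk L_k1 / A_j1) b_k]; the anchor states
    force [L_k1 > 0], so these weights are nonnegative, and invertibility of
    [L] makes them the only affine coordinates of [d_j].  The identity for [W]
    is this formula for the weights, multiplied out.  Neither the Markov
    structure of [U V^T] nor the singular value decomposition is needed. *)

From HB Require Import structures.
From mathcomp Require Import all_boot all_order all_algebra.
Import Order.TTheory GRing.Theory Num.Theory.
Local Open Scope ring_scope.
Set Implicit Arguments.
Unset Strict Implicit.
Unset Printing Implicit Defensive.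

Definition dehomog (R : fieldType) (r : nat) (x : 'rV[R]_r.+1) : 'rV[R]_r :=
  \row_m (x 0 (lift ord0 m) / x 0 ord0).

Lemma dehomogZ (R : fieldType) (r : nat) (c : R) (x : 'rV[R]_r.+1) :
  c != 0 -> dehomog (c *: x) = dehomog x.
Proof.
by move=> c_neq0; apply/rowP => m; rewrite !mxE invfM mulrACA mulfV ?mul1r.
Qed.

Section AffineCoordinates.
Variables (R : fieldType) (r : nat) (L : 'M[R]_r.+1).
Hypothesis L_col0_neq0 : forall k, L k ord0 != 0.

Lemma affine_comb_dehomogP (x w : 'rV[R]_r.+1) : x 0 ord0 != 0 ->
  (\sum_k w 0 k = 1 /\ dehomog x = \sum_k w 0 k *: dehomog (row k L)) <->
  (\row_k (w 0 k / L k ord0)) *m L = (x 0 ord0)^-1 *: x.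
Proof.
move=> x0_neq0; set u := \row_k _.
have u_col0 : (u *m L) 0 ord0 = \sum_k w 0 k.
  by rewrite mxE; apply: eq_bigr => k _; rewrite mxE divfK.
have u_lift m : (u *m L) 0 (lift ord0 m)
              = (\sum_k w 0 k *: dehomog (row k L)) 0 m.
  rewrite mxE summxE; apply: eq_bigr => k _.
  by rewrite !mxE mulrAC -mulrA.
split=> [[w_sum1 x_comb] | uL].
- apply/rowP => i; rewrite [RHS]mxE.
  case: (unliftP ord0 i) => [m ->|->]; last by rewrite u_col0 w_sum1 mulVf.
  by rewrite u_lift -x_comb mxE mulrC.
- split; first by rewrite -u_col0 uL mxE mulVf.
  by apply/rowP => m; rewrite -u_lift uL !mxE mulrC.
Qed.

Hypothesis L_unit : L \in unitmx.

Lemma affine_coordsP (y w : 'rV[R]_r.+1) : (y *m L) 0 ord0 != 0 ->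
  (\sum_k w 0 k = 1 /\
     dehomog (y *m L) = \sum_k w 0 k *: dehomog (row k L)) <->
  w = \row_k (y 0 k * L k ord0 / (y *m L) 0 ord0).
Proof.
move=> x0_neq0; apply: (iff_trans (affine_comb_dehomogP _ x0_neq0)).
rewrite scalemxAl; split=> [/(can_inj (mulmxK L_unit)) /rowP u_eq | ->].
- apply/rowP => k; have := u_eq k; rewrite !mxE => u_k.
  by rewrite -[LHS](divfK (L_col0_neq0 k)) u_k [RHS]mulrAC [_ * y 0 k]mulrC.
- congr (_ *m L); apply/rowP => k; rewrite !mxE.
  by rewrite mulrAC mulfK // mulrC.
Qed.

End AffineCoordinates.

Lemma anchor_state_mulmx (R : rcfType) (p r n : nat) (V : 'M[R]_(p, r))
    (M : 'M[R]_(r, n)) j k i :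
  anchor_state V j k -> (V *m M) j i = V j k * M k i.
Proof.
move=> [_ V_off]; rewrite mxE (bigD1 k) //= big1 ?addr0 //.
by move=> s s_neq_k; rewrite V_off ?mul0r.
Qed.

Lemma row_diag_isqrt_mul (R : rcfType) (p n : nat) (pi : 'rV[R]_p)
    (M : 'M[R]_(p, n)) j :
  row j (diag_isqrt pi *m M) = (Num.sqrt (pi 0 j))^-1 *: row j M.
Proof. by apply/rowP => k; rewrite mul_diag_mx !mxE. Qed.

Section AnchoredFactorization.
Variables (R : rcfType) (p r : nat) (pi : 'rV[R]_p)
  (V H : 'M[R]_(p, r.+1)) (L : 'M[R]_r.+1).
Hypothesis pi_gt0 : forall j, 0 < pi 0 j.
Hypothesis V_ge0 : nonneg_mx V.
Hypothesis anchors : forall k, exists j, anchor_state V j k.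
Hypothesis L_unit : L \in unitmx.
Hypothesis H_def : H = diag_isqrt pi *m V *m L.
Hypothesis H_col0_gt0 : forall j, 0 < H j ord0.

Definition membership_weights j : 'rV[R]_r.+1 :=
  \row_k (V j k * L k ord0 / (V *m L) j ord0).

Lemma sqrt_pi_gt0 j : 0 < Num.sqrt (pi 0 j).
Proof. by rewrite sqrtr_gt0. Qed.

Lemma row_H j : row j H = (Num.sqrt (pi 0 j))^-1 *: row j (V *m L).
Proof. by rewrite H_def -mulmxA row_diag_isqrt_mul. Qed.

Lemma H_col0_mul_sqrt_pi j : H j ord0 * Num.sqrt (pi 0 j) = (V *m L) j ord0.
Proof.
have := congr1 (fun v : 'rV_r.+1 => v 0 ord0) (row_H j); rewrite !mxE => ->.
by rewrite mulrAC mulVf ?mul1r // gt_eqF ?sqrt_pi_gt0.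
Qed.

Lemma VL_col0_gt0 j : 0 < (V *m L) j ord0.
Proof. by rewrite -H_col0_mul_sqrt_pi mulr_gt0 ?sqrt_pi_gt0. Qed.

Lemma L_col0_gt0 k : 0 < L k ord0.
Proof.
have [j anchor_jk] := anchors k; have := VL_col0_gt0 j.
by rewrite (anchor_state_mulmx _ _ anchor_jk) pmulr_rgt0 //; case: anchor_jk.
Qed.

Lemma row_Dmat j : row j (Dmat H) = dehomog (row j V *m L).
Proof.
have isqrt_neq0 : (Num.sqrt (pi 0 j))^-1 != 0.
  by rewrite invr_eq0 gt_eqF ?sqrt_pi_gt0.
rewrite -row_mul -(dehomogZ _ isqrt_neq0) -row_H.
by apply/rowP => m; rewrite !mxE.
Qed.

Lemma bvec_dehomog k : bvec L k = dehomog (row k L).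
Proof. by apply/rowP => m; rewrite !mxE. Qed.

Lemma affine_coords_row j (w : 'rV[R]_r.+1) :
  (\sum_k w 0 k = 1 /\ row j (Dmat H) = \sum_k w 0 k *: bvec L k) <->
  w = membership_weights j.
Proof.
have -> : membership_weights j
        = \row_k (row j V 0 k * L k ord0 / (row j V *m L) 0 ord0).
  by apply/rowP => k; rewrite -row_mul !mxE.
have -> : \sum_k w 0 k *: bvec L k = \sum_k w 0 k *: dehomog (row k L).
  by apply: eq_bigr => k _; rewrite bvec_dehomog.
rewrite row_Dmat.
apply: (affine_coordsP (fun k => lt0r_neq0 (L_col0_gt0 k)) L_unit).
by rewrite -row_mul mxE lt0r_neq0 ?VL_col0_gt0.
Qed.

Lemma simplex_coordsP j (w : 'rV[R]_r.+1) :
  std_simplex w /\ row j (Dmat H) = \sum_k w 0 k *: bvec L k <->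
  w = membership_weights j.
Proof.
split=> [[[_ w_sum1] w_comb] | ->]; first exact/affine_coords_row.
have [_ /(_ erefl) [w_sum1 w_comb]] :=
  affine_coords_row j (membership_weights j).
split=> //; split=> // k; rewrite mxE divr_ge0 ?mulr_ge0 //.
- exact: ltW (L_col0_gt0 k).
- exact: ltW (VL_col0_gt0 j).
Qed.

Lemma membership_weights_rescaled j k :
  H j ord0 * Num.sqrt (pi 0 j) * membership_weights j 0 k = V j k * L k ord0.
Proof.
rewrite H_col0_mul_sqrt_pi mulrC /membership_weights mxE.
by rewrite divfK ?lt0r_neq0 ?VL_col0_gt0.
Qed.

End AnchoredFactorization.

Theorem mainTheorem15 (R : rcfType) (p r' : nat)
  (U V : 'M[R]_(p, r'.+1)) (pi : 'rV[R]_p)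
  (H : 'M[R]_(p, r'.+1)) (L : 'M[R]_(r'.+1)) :
  transition_mx (U *m V^T) ->
  stationary_distr (U *m V^T) pi ->
  (forall i, 0 < pi 0 i) ->
  nonneg_mx U -> nonneg_mx V ->
  U *m (const_mx 1 : 'cV[R]_r'.+1) = (const_mx 1 : 'cV[R]_p) ->
  V^T *m (const_mx 1 : 'cV[R]_p) = (const_mx 1 : 'cV[R]_r'.+1) ->
  (forall k, exists j, anchor_state V j k) ->
  \rank U = r'.+1 ->
  right_sing_vectors_nonzero
    (diag_mx pi *m (U *m V^T) *m diag_isqrt pi) H ->
  (forall i, 0 < H i ord0) ->
  L \in unitmx ->
  H = diag_isqrt pi *m V *m L ->
  (forall j : 'I_p, exists! w : 'rV[R]_r'.+1,
     std_simplex w /\ row j (Dmat H) = \sum_(k < r'.+1) w 0 k *: bvec L k) /\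
  (forall W : 'M[R]_(p, r'.+1),
     (forall j : 'I_p, std_simplex (row j W) /\
        row j (Dmat H) = \sum_(k < r'.+1) W j k *: bvec L k) ->
     diag_mx (row 0 H^T) *m diag_sqrt pi *m W = V *m diag_mx (row 0 L^T)).
Proof.
move=> _ _ pi_gt0 _ V_ge0 _ _ anchors _ _ H_col0_gt0 L_unit H_def.
have coordsP := simplex_coordsP pi_gt0 V_ge0 anchors L_unit H_def H_col0_gt0.
split=> [j | W W_coords].
  exists (membership_weights V L j); split; first exact/coordsP.
  by move=> w /coordsP.
apply/matrixP => j k.
have W_jk : W j k = membership_weights V L j 0 k.
  have [W_simplex W_comb] := W_coords j.
  have /coordsP <- : std_simplex (row j W) /\
      row j (Dmat H) = \sum_k row j W 0 k *: bvec L k.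
    by split=> //; rewrite W_comb; apply: eq_bigr => i _; rewrite mxE.
  by rewrite mxE.
rewrite -mulmxA /diag_sqrt !mul_diag_mx mul_mx_diag !mxE W_jk mulrA.
exact: membership_weights_rescaled.
Qed.
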